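(* Let $B$ be a Banach ring. For any family $\mu=(\mu_b)_{b\in\mathcal{M}(B)}\in\mathcal{F}_B$, set $L_\mu(\varphi)(b)=\int\varphi|_{\pi^{-1}(b)}\,d\mu_b$ for $\varphi\in\mathcal{C}^0(\mathbb{P}^{1,an}_B)$ and $b\in\mathcal{M}(B)$. Then $L_\mu$ is a continuous family of positive measures on $\mathbb{P}^{1,an}_B$, and the map $\mu\mapsto L_\mu$ is a bijection between $\mathcal{F}_B$ and the set $\mathrm{M}^+(\mathbb{P}^1,B)$ of continuous families of positive measures on $\mathbb{P}^{1,an}_B$.
   Context: $B$ is a commutative Banach ring with unit; $\mathcal{M}(B)$ is its Berkovich spectrum (bounded multiplicative seminorms on $B$, a compact space). $\mathbb{P}^{1,an}_B$ is the Berkovich projective line over $B$ (compact), with canonical continuous projection $\pi\colon\mathbb{P}^{1,an}_B\to\mathcal{M}(B)$ (restriction of seminorms to $B$), whose fiber $\pi^{-1}(b)$ is identified with $\mathbb{P}^{1,an}_{\mathscr{H}(b)}$. A continuous family of positive measures on $\mathbb{P}^{1,an}_B$ is a linear map $L\colon\mathcal{C}^0(\mathbb{P}^{1,an}_B)\to\mathcal{C}^0(\mathcal{M}(B))$ (real-valued continuous functions) sending nonnegative functions to nonnegative functions and such that $L(\varphi\circ\pi)=\varphi\times L(1)$ for all $\varphi\in\mathcal{C}^0(\mathcal{M}(B))$. $\mathcal{F}_B$ is the set of families $(\mu_b)_{b\in\mathcal{M}(B)}$ of positive Radon measures on $\mathbb{P}^{1,an}_B$ with $\mu_b$ supported on $\pi^{-1}(b)$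 and $b\mapsto\mu_b$ continuous for the weak-$*$ topology. *)

From HB Require Import structures.
From mathcomp Require Import all_boot all_order all_algebra.
From mathcomp Require Import all_classical all_reals all_analysis.
Set Implicit Arguments. Unset Strict Implicit. Unset Printing Implicit Defensive.
Import Order.TTheory GRing.Theory Num.Theory.
Import numFieldNormedType.Exports.
Local Open Scope classical_set_scope.
Local Open Scope ring_scope.

Section Berk.
Context {R : realType}.

Definition ring_norm {B : comNzRingType} (nrm : B -> R) : Prop :=
  [/\ nrm 0 = 0, nrm 1 = 1,
      (forall a b, nrm (a - b) <= nrm a + nrm b),
      (forall a b, nrm (a * b) <= nrm a * nrm b) &
      (forall a, nrm a = 0 -> a = 0)].

Definition norm_complete {B : comNzRingType} (nrm : B -> R) : Prop :=
  forall u : nat -> B,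
    (forall e : R, 0 < e -> exists N : nat, forall m n : nat,
        (N <= m)%N -> (N <= n)%N -> nrm (u m - u n) < e) ->
    exists l : B, forall e : R, 0 < e -> exists N : nat, forall n : nat,
        (N <= n)%N -> nrm (u n - l) < e.

Definition banach_ring {B : comNzRingType} (nrm : B -> R) : Prop :=
  ring_norm nrm /\ norm_complete nrm.

Definition mult_seminorm {A : nzRingType} (x : A -> R) : Prop :=
  [/\ x 0 = 0, x 1 = 1,
      (forall a b, x (a - b) <= x a + x b) &
      (forall a b, x (a * b) = x a * x b)].

Context {B : comNzRingType} (nrm : B -> R).

Definition MBset : set {ptws B -> R} :=
  [set x | mult_seminorm x /\ forall a, x a <= nrm a].
Definition MB := set_type MBset.

Definition A1set : set {ptws {poly B} -> R} :=
  [set x | mult_seminorm x /\ forall a, x a%:P <= nrm a].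
Definition A1 := set_type A1set.

(** the polynomial S^n P(1/S) *)
Definition revn (n : nat) (P : {poly B}) : {poly B} := \poly_(i < n.+1) P`_(n - i).

(** x (chart with coordinate T) and y (chart with coordinate S = 1/T)
    represent the same point of the gluing *)
Definition glue (x y : A1) : Prop :=
  forall (P : {poly B}) (n : nat), (size P <= n.+1)%N ->
    val y (revn n P) = val x P * val y 'X ^+ n.

Lemma revnK n (Q : {poly B}) : (size Q <= n.+1)%N -> revn n (revn n Q) = Q.
Proof.
move=> hQ; apply/polyP => k; rewrite !coef_poly; case: ltnP => hk.
  by rewrite (leq_ltn_trans (leq_subr k n) (ltnSn n)) subKn.
by rewrite nth_default // (leq_trans hQ hk).
Qed.

Lemma revn1X : revn 1 'X = 1.
Proof.
apply/polyP => k; rewrite coef_poly coef1 /=.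
by case: k => [|[|k]] //=; rewrite coefX.
Qed.

Lemma A1_ms (x : A1) : mult_seminorm (val x).
Proof. by have /set_mem [] := valP x. Qed.

Lemma glue_X x y : glue x y -> val x 'X * val y 'X = 1.
Proof.
move=> H; have := H 'X 1%N; rewrite size_polyX revn1X => /(_ isT) /esym.
by rewrite expr1; case: (A1_ms y) => _ -> _ _.
Qed.

Lemma glue_uniq_l x x' y : glue x y -> glue x' y -> x = x'.
Proof.
move=> H H'; have yX0 : val y 'X != 0.
  by apply/eqP => h; move: (glue_X H); rewrite h mulr0 => /eqP; rewrite eq_sym oner_eq0.
apply: val_inj; apply: funext => P.
have hP : (size P <= ((size P).-1).+1)%N by rewrite leqSpred.
by have := H P _ hP; rewrite (H' P _ hP) => /(mulIf (expf_neq0 _ yX0)).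
Qed.

Lemma glue_uniq_r x y y' : glue x y -> glue x y' -> y = y'.
Proof.
move=> H H'; have hX : val y 'X = val y' 'X.
  have h1 := glue_X H; have h2 := glue_X H'.
  have xX0 : val x 'X != 0.
    by apply/eqP => h; move: h1; rewrite h mul0r => /eqP; rewrite eq_sym oner_eq0.
  by apply: (mulfI xX0); rewrite h1 h2.
apply: val_inj; apply: funext => Q.
set n := (size Q).-1.
have hQ : (size Q <= n.+1)%N by rewrite leqSpred.
have hP : (size (revn n Q) <= n.+1)%N by exact: size_poly.
by rewrite -(revnK hQ) (H _ _ hP) (H' _ _ hP) hX.
Qed.

Definition A1fam : bool -> topologicalType := fun _ => A1.
(** disjoint union of the two charts: [true] = coordinate T, [false] = S *)
Definition Charts := {i : bool & A1fam i}.

Definition glue_rel (u v : Charts) : Prop :=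
  match u, v with
  | existT i x, existT j y =>
      if i == j then x = y else if i then glue x y else glue y x
  end.

Definition glue_relb : rel Charts := fun u v => `[< glue_rel u v >].

Lemma glue_relb_refl : reflexive glue_relb.
Proof. by move=> [[] x]; apply/asboolP. Qed.

Lemma glue_relb_sym : symmetric glue_relb.
Proof.
by move=> [[] x] [[] y]; apply/asboolP/asboolP => //= h; subst.
Qed.

Lemma glue_relb_trans : transitive glue_relb.
Proof.
move=> [[] y] [[] x] [[] z] /asboolP /= h1 /asboolP /= h2; apply/asboolP => /=.
all: try by subst.
- exact: (glue_uniq_r h1 h2).
- exact: (glue_uniq_l h1 h2).
Qed.

Canonical glue_equiv := EquivRel glue_relb glue_relb_refl glue_relb_sym glue_relb_trans.

Definition P1 : topologicalType := quotient_topology {eq_quot glue_relb}%qT.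


Lemma restr_mem (x : A1) : ((fun c : B => val x c%:P) : {ptws B -> R}) \in MBset.
Proof.
apply/mem_set; have /set_mem [[h0 h1 hB hM] hb] := valP x; split=> //; split.
- by rewrite polyC0.
- by rewrite polyC1.
- by move=> a b; rewrite polyCB.
- by move=> a b; rewrite polyCM.
Qed.

Definition restr (x : A1) : MB := @exist _ (fun f => f \in MBset) _ (restr_mem x).

Definition proj1 (p : P1) : MB := restr (projT2 (repr p)).

Definition fiber (b : MB) : set P1 := proj1 @^-1` [set b].

End Berk.

Definition C0 (R : realType) (X : topologicalType) := {f : X -> R | continuous f}.

Section Radon.
Context {R : realType}.


(** positive Radon measures on a compact space X, in Bourbaki's sense:
    positive linear forms on C0(X) *)
Definition positive_radon {X : topologicalType} (m : C0 R X -> R) : Prop :=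
  (forall (a : R) (f g h : C0 R X),
      (forall x, sval h x = a * sval f x + sval g x) -> m h = a * m f + m g) /\
  (forall f : C0 R X, (forall x, 0 <= sval f x) -> 0 <= m f).

(** the support of m is contained in the (closed) set F: m vanishes on
    every continuous function whose support does not meet F *)
Definition supported_on {X : topologicalType} (m : C0 R X -> R) (F : set X) : Prop :=
  forall f : C0 R X, closure [set x | sval f x != 0] `&` F = set0 -> m f = 0.
End Radon.

Section Families.
Context {R : realType} {B : comNzRingType} (nrm : B -> R).

Definition FB (mu : MB nrm -> C0 R (P1 nrm) -> R) : Prop :=
  (forall b, positive_radon (mu b) /\ supported_on (mu b) (fiber b)) /\
  (forall phi : C0 R (P1 nrm), continuous (fun b => mu b phi)).

(** L_mu(phi)(b) = integral of phi|_{pi^{-1}(b)} against mu_b *)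
Definition Lmu (mu : MB nrm -> C0 R (P1 nrm) -> R) : C0 R (P1 nrm) -> MB nrm -> R :=
  fun phi b => mu b phi.

(** M^+(P^1, B): continuous families of positive measures, i.e. linear maps
    L : C0(P^1_B) -> C0(M(B)), positive, with L(phi o pi) = phi * L(1) *)
Definition Mplus (L : C0 R (P1 nrm) -> MB nrm -> R) : Prop :=
  [/\ (forall phi, continuous (L phi)),
      (forall (a : R) (f g h : C0 R (P1 nrm)),
         (forall x, sval h x = a * sval f x + sval g x) ->
         L h = (fun b => a * L f b + L g b)),
      (forall f : C0 R (P1 nrm), (forall x, 0 <= sval f x) -> forall b, 0 <= L f b) &
      (forall (psi : C0 R (MB nrm)) (h one : C0 R (P1 nrm)),
         (forall p, sval h p = sval psi (proj1 p)) -> (forall p, sval one p = 1) ->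
         L h = (fun b => sval psi b * L one b))].
End Families.

(* Both directions of the correspondence are the exchange of arguments
   [L phi b = mu_b phi]; the content lies in matching the support condition on
   [mu_b] with the module condition [L (psi \o pi) = psi * L 1].
   A positive functional supported on the fibre over [b] kills every continuous
   function vanishing on that fibre, in particular [psi \o pi - psi b].
   Conversely, if [phi] vanishes near the fibre over [b], then [pi] maps the
   support of [phi] onto a compact set missing [b], because [P^1_B] is compact:
   it is covered by the closed unit discs [|T| <= 1] and [|1/T| <= 1] of the two
   charts, each a closed subset of a product of segments (Tychonoff). An Urysohn
   function [U] on [M(B)] with [U b = 0] and [U = 1] on that set gives
   [|phi| <= sup |phi| * (U \o pi)], hence [|L phi b| <= sup |phi| * U b * L 1 b = 0]. *)

From Pilot Require Import Defs.
From HB Require Import structures.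
From mathcomp Require Import all_boot all_order all_algebra.
From mathcomp Require Import all_classical all_reals all_analysis.
From mathcomp Require Import zify ring lra.
Import Order.TTheory GRing.Theory Num.Theory.
Import numFieldNormedType.Exports.
Local Open Scope classical_set_scope.
Local Open Scope ring_scope.
Set Implicit Arguments. Unset Strict Implicit. Unset Printing Implicit Defensive.

Section MultSeminorm.
Context {R : realType} {A : nzRingType} (x : A -> R) (hx : mult_seminorm x).

Lemma mult_seminorm_ge0 a : 0 <= x a.
Proof.
have [x0 _ xB _] := hx; have := xB a a; rewrite subrr x0 => h.
by rewrite -(@pmulr_rge0 _ 2) // mulr2n mulrDl !mul1r.
Qed.

Lemma mult_seminormN1 : x (-1) = 1.
Proof.
have [_ x1 _ xM] := hx; have /esym/eqP := xM (-1) (-1).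
rewrite mulrNN mulr1 x1 -expr2 sqrf_eq1 => /orP[/eqP //|/eqP xN1].
by have := mult_seminorm_ge0 (-1); rewrite xN1; lra.
Qed.

Lemma mult_seminormN a : x (- a) = x a.
Proof. by have [_ _ _ xM] := hx; rewrite -mulN1r xM mult_seminormN1 mul1r. Qed.

Lemma mult_seminormD a b : x (a + b) <= x a + x b.
Proof. by have [_ _ xB _] := hx; have := xB a (- b); rewrite opprK mult_seminormN. Qed.

Lemma mult_seminormX a n : x (a ^+ n) = x a ^+ n.
Proof.
have [_ x1 _ xM] := hx; elim: n => [|n IHn]; first by rewrite !expr0.
by rewrite !exprS xM IHn.
Qed.

Lemma mult_seminorm_sum (I : Type) (r : seq I) (F : I -> A) :
  x (\sum_(i <- r) F i) <= \sum_(i <- r) x (F i).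
Proof.
elim: r => [|i r IHr]; first by rewrite !big_nil; case: hx => ->.
by rewrite !big_cons; apply: le_trans (mult_seminormD _ _) (lerD _ IHr).
Qed.
End MultSeminorm.

Section Reversal.
Context {B : comNzRingType}.
Implicit Types P Q : {poly B}.

Lemma coef_revn n P i : (revn n P)`_i = if (i < n.+1)%N then P`_(n - i) else 0.
Proof. exact: coef_poly. Qed.

Lemma revnD n P Q : revn n (P + Q) = revn n P + revn n Q.
Proof. by apply/polyP => i; rewrite coefD !coef_revn; case: ifP; rewrite ?coefD ?addr0. Qed.

Lemma revnB n P Q : revn n (P - Q) = revn n P - revn n Q.
Proof. by apply/polyP => i; rewrite coefB !coef_revn; case: ifP; rewrite ?coefB ?subr0. Qed.

Lemma revn0 n : revn n (0 : {poly B}) = 0.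
Proof. by apply/polyP => i; rewrite coef_revn coef0; case: ifP; rewrite ?coef0. Qed.

Lemma revn_sum n (I : Type) (r : seq I) (F : I -> {poly B}) :
  revn n (\sum_(i <- r) F i) = \sum_(i <- r) revn n (F i).
Proof. exact: (big_morph _ (revnD n) (revn0 n)). Qed.

Lemma revnZXn n (c : B) k : (k <= n)%N -> revn n (c *: 'X^k) = c *: 'X^(n - k).
Proof.
move=> le_kn; apply/polyP => i; rewrite coef_revn !coefZ !coefXn.
case: ifP => lt_in; first by congr (_ * _%:R); apply/eqP/eqP; lia.
by rewrite (_ : (i == n - k)%N = false) ?mulr0 //; apply/eqP; lia.
Qed.

Lemma poly_expand n P : (size P <= n.+1)%N -> P = \sum_(i < n.+1) P`_i *: 'X^i.
Proof. by move=> szP; rewrite -poly_def -[LHS](take_poly_id szP). Qed.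

Lemma revn_expand n P : (size P <= n.+1)%N ->
  revn n P = \sum_(i < n.+1) P`_i *: 'X^(n - i).
Proof.
move=> szP; rewrite {1}(poly_expand szP) revn_sum; apply: eq_bigr => i _.
by rewrite revnZXn // -ltnS.
Qed.

Lemma revnM n1 n2 P Q : (size P <= n1.+1)%N -> (size Q <= n2.+1)%N ->
  revn (n1 + n2) (P * Q) = revn n1 P * revn n2 Q.
Proof.
move=> szP szQ; rewrite (revn_expand szP) (revn_expand szQ).
rewrite {1}(poly_expand szP) {1}(poly_expand szQ).
rewrite big_distrl /= revn_sum big_distrl /=; apply: eq_bigr => i _.
rewrite big_distrr /= revn_sum big_distrr /=; apply: eq_bigr => j _.
have := ltn_ord i; have := ltn_ord j => lt_j lt_i.
rewrite -scalerAl -scalerAr scalerA -exprD revnZXn; last by lia.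
by rewrite -scalerAl -scalerAr scalerA -exprD; congr (_ *: 'X^_); lia.
Qed.

Lemma revn1 n : revn n (1 : {poly B}) = 'X^n.
Proof. by rewrite -(scale1r 1) -(expr0 'X) revnZXn // subn0 scale1r. Qed.

Lemma revn_shift n k P : (size P <= k.+1)%N -> (k <= n)%N ->
  revn n P = 'X^(n - k) * revn k P.
Proof.
move=> szP le_kn; rewrite -(subnK le_kn) -{1}[P]mul1r revnM ?size_poly1 //.
by rewrite revn1 subnK.
Qed.

Lemma revn0C (c : B) : revn 0 c%:P = c%:P.
Proof. by apply/polyP => -[|i]; rewrite coef_revn //= coefC. Qed.
End Reversal.

Section InvChart.
Context {R : realType} {B : comNzRingType} (nrm : B -> R).
Implicit Types P Q : {poly B}.

(* A point with [|T| <> 0], seen in the chart of coordinate [1/T]: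
   [|Q(1/T)| = |T^n Q(1/T)| / |T|^n] for any [n >= deg Q]. *)
Definition inv_chart (f : {poly B} -> R) : {ptws {poly B} -> R} :=
  fun Q => f (revn (size Q).-1 Q) / f 'X ^+ (size Q).-1.

Variable f : {poly B} -> R.
Hypothesis f_ms : mult_seminorm f.
Hypothesis fX_neq0 : f 'X != 0.

Lemma inv_chartE n Q : (size Q <= n.+1)%N -> inv_chart f Q = f (revn n Q) / f 'X ^+ n.
Proof.
move=> szQ; rewrite /inv_chart; set k := (size Q).-1.
have le_kn : (k <= n)%N by rewrite /k; lia.
have szQk : (size Q <= k.+1)%N by rewrite /k; lia.
have [_ _ _ fM] := f_ms.
rewrite (revn_shift szQk le_kn) fM (mult_seminormX f_ms).
by rewrite -[in f 'X ^+ n](subnK le_kn) exprD; field; rewrite !expf_neq0.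
Qed.

Lemma inv_chartX : inv_chart f 'X = (f 'X)^-1.
Proof.
have [_ f1 _ _] := f_ms.
by rewrite (@inv_chartE 1) ?size_polyX // revn1X expr1 f1 div1r.
Qed.

Lemma inv_chart_A1set : (forall a, f a%:P <= nrm a) -> A1set nrm (inv_chart f).
Proof.
move=> f_bnd; have [f0 f1 fB fM] := f_ms; split; first split.
- by rewrite /inv_chart size_poly0 revn0 f0 mul0r.
- by rewrite /inv_chart size_poly1 -polyC1 revn0C polyC1 f1 expr0 divr1.
- move=> P Q; set n := maxn (size P) (size Q).
  have szP : (size P <= n.+1)%N by rewrite leqW ?leq_maxl.
  have szQ : (size Q <= n.+1)%N by rewrite leqW ?leq_maxr.
  have szPQ : (size (P - Q)%R <= n.+1)%N.
    by apply: leq_trans (size_add _ _) _; rewrite size_polyN leqW.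
  rewrite !(inv_chartE szP, inv_chartE szQ, inv_chartE szPQ) revnB -mulrDl ler_wpM2r //.
  by rewrite invr_ge0 exprn_ge0 // mult_seminorm_ge0.
- move=> P Q.
  have szPQ : (size (P * Q)%R <= (size P + size Q).+1)%N.
    by apply: leq_trans (size_mul_leq _ _) _; rewrite leqW ?leq_pred.
  rewrite (inv_chartE szPQ) (@inv_chartE (size P)) ?leqnSn // (@inv_chartE (size Q)) ?leqnSn //.
  by rewrite revnM ?leqnSn // fM exprD invfM mulrACA.
- by move=> a; rewrite (@inv_chartE 0) ?size_polyC ?leq_b1 // revn0C expr0 divr1.
Qed.
End InvChart.

Lemma A1_bounded {R : realType} {B : comNzRingType} {nrm : B -> R} (z : A1 nrm) a :
  val z a%:P <= nrm a.
Proof. by have /set_mem [] := valP z. Qed.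

Section InvChartPoint.
Context {R : realType} {B : comNzRingType} (nrm : B -> R).
Variable z : A1 nrm.
Hypothesis zX_neq0 : val z 'X != 0.

Definition inv_chart_point : A1 nrm :=
  exist (fun g => g \in A1set nrm) _
    (mem_set (inv_chart_A1set (A1_ms z) zX_neq0 (@A1_bounded _ _ _ z))).

Lemma inv_chart_pointX : val inv_chart_point 'X = (val z 'X)^-1.
Proof. exact: (inv_chartX (A1_ms z) zX_neq0). Qed.

Lemma glue_inv_chart_point : Defs.glue z inv_chart_point.
Proof.
move=> P n szP; rewrite /= (inv_chartE (A1_ms z) zX_neq0 (size_poly _ _)) revnK //.
by rewrite (inv_chartX (A1_ms z) zX_neq0) exprVn.
Qed.

Lemma inv_chart_point_glue : Defs.glue inv_chart_point z.
Proof.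
by move=> P n szP; rewrite /= (inv_chartE (A1_ms z) zX_neq0 szP) divfK // expf_neq0.
Qed.
End InvChartPoint.

Lemma continuous_ptws {R : realType} {X : topologicalType} {I : Type}
    (h : X -> {ptws I -> R}) :
  (forall i, continuous (fun x => h x i)) -> continuous h.
Proof.
move=> h_cont x; apply/cvg_sup => i.
exact: (continuous_comp_initial (w := @proj I (fun _ => R) i) (h_cont i)).
Qed.

Section Projection.
Context {R : realType} {B : comNzRingType} (nrm : B -> R).

Lemma restr_continuous : continuous (@restr R B nrm).
Proof.
apply: continuous_comp_initial; apply: continuous_ptws => c x /=.
have := @proj_continuous _ (fun _ : {poly B} => R) c%:P (set_val x).
exact: continuous_comp (@initial_continuous _ _ (@set_val _ (A1set nrm)) x).
Qed.

Lemma restr_glue (x y : A1 nrm) : Defs.glue x y -> restr x = restr y.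
Proof.
move=> xy; apply: val_inj; apply: funext => c /=.
by have := xy c%:P 0%N; rewrite size_polyC leq_b1 revn0C expr0 mulr1 => ->.
Qed.

Lemma restr_glue_relb (u v : Charts nrm) :
  glue_relb u v -> restr (projT2 u) = restr (projT2 v).
Proof.
case: u v => [[] x] [[] y] /asboolP /= uv.
- by rewrite uv.
- exact: restr_glue.
- by rewrite (restr_glue uv).
- by rewrite uv.
Qed.

Lemma proj1_continuous : continuous (@proj1 R B nrm).
Proof.
apply: (@repr_comp_continuous _ _ _ (fun u : Charts nrm => restr (projT2 u))).
  by move=> [i x]; exact: restr_continuous.
move=> u v /eqP uv.
by have /eqmodP /restr_glue_relb -> : (u = v %[mod {eq_quot (@glue_relb R B nrm)}])%qT.
Qed.

Lemma MB_hausdorff : hausdorff_space (MB nrm).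
Proof.
move=> x y xy_cl; apply: val_inj.
have ptws_hausdorff : hausdorff_space {ptws B -> R}.
  by apply: hausdorff_product => _; exact: Rhausdorff.
apply: ptws_hausdorff => U V U_nbhs V_nbhs.
have val_cont := @initial_continuous _ _ (@set_val _ (MBset nrm)).
have [z [Uz Vz]] := xy_cl _ _ (val_cont x U U_nbhs) (val_cont y V V_nbhs).
by exists (val z).
Qed.
End Projection.

Section ClosedSets.
Context {T : topologicalType}.

Lemma closed_forall {I : Type} (P : I -> set T) :
  (forall i, closed (P i)) -> closed [set t | forall i, P i t].
Proof.
move=> P_closed; have -> : [set t | forall i, P i t] = \bigcap_(i in [set: I]) P i.
  by apply/seteqP; split => t /= Pt i //; exact: Pt.
by apply: closed_bigI => i _.
Qed.

Context {R : realType}.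

Lemma closed_fun_le (g h : T -> R) : continuous g -> continuous h ->
  closed [set t | g t <= h t].
Proof.
move=> g_cont h_cont.
have -> : [set t | g t <= h t] = (fun t => h t - g t) @^-1` [set r | 0 <= r].
  by apply/seteqP; split => t /=; rewrite subr_ge0.
apply: preimage_closed; last exact: closed_ge.
by move=> t _; exact: (continuousD (h_cont t) (continuousN (g_cont t))).
Qed.

Lemma closed_fun_eq (g h : T -> R) : continuous g -> continuous h ->
  closed [set t | g t = h t].
Proof.
move=> g_cont h_cont.
have -> : [set t | g t = h t] = [set t | g t <= h t] `&` [set t | h t <= g t].
  apply/seteqP; split => t /=; first by move->.
  by case=> gh hg; apply/eqP; rewrite eq_le gh.
by apply: closedI; apply: closed_fun_le.
Qed.
End ClosedSets.

Lemma compact_set_val {T : topologicalType} (S K : set T) :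
  K `<=` S -> compact K -> compact (@set_val T S @^-1` K).
Proof.
move=> KS K_compact F F_proper FK.
have [p [Kp p_cluster]] := K_compact _ (fmap_proper_filter set_val F_proper) FK.
exists (exist (fun t => t \in S) p (mem_set (KS _ Kp))); split => //.
move=> A C FA; rewrite nbhsE => -[D [[W W_open <-] Wp] DC].
have FA' : F (set_val @^-1` (set_val @` A)) by apply: filterS FA => a Aa; exists a.
have [_ [[a Aa <-] Wa]] := p_cluster _ _ FA' (open_nbhs_nbhs (conj W_open Wp)).
by exists a; split => //; apply: DC.
Qed.

Section MultSeminormClosed.
Context {R : realType} {A : nzRingType}.

Lemma mult_seminorm_closed : closed [set x : {ptws A -> R} | mult_seminorm x].
Proof.
have coord_cont (a : A) : continuous (fun x : {ptws A -> R} => x a).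
  exact: (@proj_continuous _ (fun _ : A => R) a).
have -> : [set x : {ptws A -> R} | mult_seminorm x] =
    [set x | x 0 = 0] `&` [set x | x 1 = 1]
    `&` [set x | forall ab : A * A, x (ab.1 - ab.2) <= x ab.1 + x ab.2]
    `&` [set x | forall ab : A * A, x (ab.1 * ab.2) = x ab.1 * x ab.2].
  apply/seteqP; split => x /=; first by case=> x0 x1 xB xM; do !split => // -[].
  by case=> [[[x0 x1] xB] xM]; split => // a b; [exact: (xB (a, b))|exact: (xM (a, b))].
do !apply: closedI; do ?apply: closed_forall => -[a b] /=.
- by apply: closed_fun_eq (coord_cont 0) _; exact: cst_continuous.
- by apply: closed_fun_eq (coord_cont 1) _; exact: cst_continuous.
- apply: closed_fun_le (coord_cont _) _ => x.
  exact: continuousD (coord_cont a x) (coord_cont b x).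
- apply: closed_fun_eq (coord_cont _) _ => x.
  exact: continuousM (coord_cont a x) (coord_cont b x).
Qed.
End MultSeminormClosed.

Section Compactness.
Context {R : realType} {B : comNzRingType} (nrm : B -> R).

Definition disc_ptws := [set g : {ptws {poly B} -> R} | A1set nrm g /\ g 'X <= 1].

Definition disc := [set x : A1 nrm | val x 'X <= 1].

Definition coef_norm_sum (P : {poly B}) : R := \sum_(i < size P) nrm P`_i.

Lemma disc_ptws_closed : closed disc_ptws.
Proof.
have coord_cont (P : {poly B}) : continuous (fun g : {ptws {poly B} -> R} => g P).
  exact: (@proj_continuous _ (fun _ : {poly B} => R) P).
apply: closedI; first apply: closedI.
- exact: mult_seminorm_closed.
- by apply: closed_forall => a; apply: closed_fun_le (coord_cont _) _; exact: cst_continuous.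
- by apply: closed_fun_le (coord_cont _) _; exact: cst_continuous.
Qed.

Lemma disc_ptws_bounded g : disc_ptws g -> forall P, 0 <= g P <= coef_norm_sum P.
Proof.
move=> [[g_ms g_bnd] gX] P; rewrite mult_seminorm_ge0 //=.
rewrite -{1}(coefK P) poly_def; apply: le_trans (mult_seminorm_sum g_ms _ _) _.
apply: ler_sum => i _; have [_ _ _ gM] := g_ms.
rewrite -mul_polyC gM (mult_seminormX g_ms) -[nrm _]mulr1.
have g_ge0 := mult_seminorm_ge0 g_ms.
by apply: ler_pM; rewrite ?exprn_ge0 ?exprn_ile1 ?g_ge0 ?g_bnd.
Qed.

Lemma disc_ptws_compact : compact disc_ptws.
Proof.
apply: (subclosed_compact disc_ptws_closed
  (tychonoff (fun P => @segment_compact R 0 (coef_norm_sum P)))).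
by move=> g g_disc P; rewrite /= in_itv; exact: disc_ptws_bounded.
Qed.

Lemma disc_compact : compact disc.
Proof.
have -> : disc = set_val @^-1` disc_ptws.
  apply/seteqP; split => x /=; last by case.
  by split => //; exact: set_mem (valP x).
by apply: (@compact_set_val _ (A1set nrm)) disc_ptws_compact => g [].
Qed.

Lemma charts_disc_compact : compact [set u : Charts nrm | disc (projT2 u)].
Proof.
have -> : [set u : Charts nrm | disc (projT2 u)] =
    existT (A1fam nrm) true @` disc `|` existT (A1fam nrm) false @` disc.
  apply/seteqP; split => [[[] x] /= x_disc|_ [] [x x_disc <-] //].
  - by left; exists x.
  - by right; exists x.
apply: compactU; apply: continuous_compact disc_compact;
  apply: continuous_subspaceT.
- exact: (@existT_continuous bool (A1fam nrm) true).
- exact: (@existT_continuous bool (A1fam nrm) false).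
Qed.

(* Outside the unit disc of one chart, [|1/T| = 1/|T| < 1] in the other chart. *)
Lemma P1_disc_repr (p : P1 nrm) :
  exists2 u : Charts nrm, disc (projT2 u) & (\pi_(P1 nrm) u = p)%qT.
Proof.
rewrite -(reprK p); case: (repr p) => i x.
have [x_disc|x_out] := leP (val x 'X) 1; first by exists (existT _ i x).
have xX_neq0 : val x 'X != 0 by apply: lt0r_neq0; apply: lt_trans x_out.
have inv_chart_disc : val (inv_chart_point xX_neq0) 'X <= 1.
  by rewrite inv_chart_pointX invf_le1 ?ltW //; apply: lt_trans x_out.
exists (existT (A1fam nrm) (~~ i) (inv_chart_point xX_neq0)) => //.
suff : (existT (A1fam nrm) (~~ i) (inv_chart_point xX_neq0) = existT _ i x
    %[mod {eq_quot (@glue_relb R B nrm)}])%qT by [].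
apply/eqmodP/asboolP; case: i x x_out xX_neq0 {inv_chart_disc} => x _ xX_neq0 /=.
- exact: glue_inv_chart_point.
- exact: inv_chart_point_glue.
Qed.

Lemma P1_compact : compact [set: P1 nrm].
Proof.
apply: (subclosed_compact closedT
  (continuous_compact (continuous_subspaceT pi_continuous) charts_disc_compact)).
by move=> p _; have [u u_disc <-] := P1_disc_repr p; exists u.
Qed.
End Compactness.

Section ContinuousFunctions.
Context {R : realType} {X : topologicalType}.

Definition C0_cst (c : R) : C0 R X := exist _ (fun=> c) (@cst_continuous X R c).

Lemma C0_lin_continuous (a : R) (f g : C0 R X) :
  continuous (fun x => a * sval f x + sval g x).
Proof.
move=> x; apply: continuousD (svalP g x).
exact: continuousM (@cst_continuous X R a x) (svalP f x).
Qed.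

Definition C0_lin (a : R) (f g : C0 R X) : C0 R X :=
  exist _ _ (@C0_lin_continuous a f g).

Lemma C0_bounded (f : C0 R X) : compact [set: X] ->
  exists M : R, forall x, `|sval f x| <= M.
Proof.
move=> X_compact.
have [M [_ M_bnd]] := compact_bounded
  (continuous_compact (continuous_subspaceT (svalP f)) X_compact).
by exists (`|M| + 1) => x; apply: M_bnd (ltr_pwDr ltr01 (ler_norm M)) _ _; exists x.
Qed.
End ContinuousFunctions.

Definition clamp {R : realType} (e t : R) : R := Num.max (- e) (Num.min e t).

Lemma clamp_norm_le {R : realType} (e t : R) : 0 <= e -> `|clamp e t| <= e.
Proof.
move=> e_ge0; rewrite /clamp ler_norml.
by rewrite le_max lexx ge_max ge_min lexx /= andbT; lra.
Qed.

Lemma clamp_id {R : realType} (e t : R) : `|t| < e -> clamp e t = t.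
Proof.
rewrite ltr_norml /clamp => /andP[lt_et lt_te].
by rewrite (min_r (ltW lt_te)) (max_r (ltW lt_et)).
Qed.

Section PositiveRadon.
Context {R : realType} {X : topologicalType}.
Variable m : C0 R X -> R.
Hypothesis m_radon : positive_radon m.

Lemma radon_lin (a : R) (f g : C0 R X) : m (C0_lin a f g) = a * m f + m g.
Proof. exact: m_radon.1. Qed.

Lemma radon_ge0 (f : C0 R X) : (forall x, 0 <= sval f x) -> 0 <= m f.
Proof. exact: m_radon.2. Qed.

Lemma radon_eq0 (f : C0 R X) : (forall x, sval f x = 0) -> m f = 0.
Proof.
move=> f0; have : m f = 1 * m f + m f.
  by apply: m_radon.1 => x; rewrite f0 mulr0 addr0.
by rewrite mul1r; lra.
Qed.

Lemma radon_cst (c : R) : m (C0_cst c) = c * m (C0_cst 1).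
Proof.
rewrite -[RHS]addr0 -(radon_eq0 (f := C0_cst 0)) //.
by apply: m_radon.1 => x /=; rewrite mulr1 addr0.
Qed.

Lemma radon_norm_le (f g : C0 R X) :
  (forall x, `|sval f x| <= sval g x) -> `|m f| <= m g.
Proof.
move=> fg; have lin_ge0 (a : R) : a = 1 \/ a = -1 -> 0 <= a * m f + m g.
  move=> a_pm1; rewrite -radon_lin; apply: radon_ge0 => x /=.
  by have := fg x; rewrite ler_norml => /andP[]; case: a_pm1 => ->; lra.
have := lin_ge0 1 (or_introl erefl); have := lin_ge0 (-1) (or_intror erefl).
by rewrite ler_norml; move=> *; apply/andP; split; lra.
Qed.

Lemma clamp_continuous (e : R) (f : C0 R X) : continuous (fun x => clamp e (sval f x)).
Proof.
apply: max_fun_continuous; first exact: cst_continuous.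
by apply: min_fun_continuous; [exact: cst_continuous | exact: svalP f].
Qed.

Section Supported.
Variables (F : set X) (f : C0 R X).
Hypotheses (m_supp : supported_on m F) (f_F : forall x, F x -> sval f x = 0).

(* [f] minus its clamp at level [e] has closed support inside [{|f| >= e}],
   which misses [F]; what remains has sup norm at most [e]. *)
Lemma radon_supported_le e : 0 < e -> `|m f| <= e * m (C0_cst 1).
Proof.
move=> e_gt0; pose r : C0 R X := exist _ _ (@clamp_continuous e f).
have -> : m f = 1 * m (C0_lin (-1) r f) + m r.
  by apply: m_radon.1 => x /=; lra.
suff -> : m (C0_lin (-1) r f) = 0.
  rewrite mulr0 add0r -radon_cst; apply: radon_norm_le => x /=.
  exact: clamp_norm_le (ltW e_gt0).
apply: m_supp; rewrite -subset0 => x [x_cl Fx].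
have large_closed : closed [set x | e <= `|sval f x|].
  apply: closed_fun_le; first exact: cst_continuous.
  by move=> y; apply: continuous_comp (svalP f y) _; exact: norm_continuous.
have : closure [set x | e <= `|sval f x|] x.
  apply: closure_subset x_cl => y /=.
  apply: contra_neqT; rewrite -ltNge => small.
  by rewrite clamp_id // mulN1r addNr.
by move/closure_id: large_closed => <- /=; rewrite f_F // normr0; lra.
Qed.

Lemma radon_supported_eq0 : m f = 0.
Proof.
have m1_ge0 : 0 <= m (C0_cst 1) by apply: radon_ge0.
apply/eqP; rewrite -normr_eq0 eq_le normr_ge0 andbT; apply/ler_addgt0Pr => e e_gt0.
rewrite add0r; apply: le_trans (radon_supported_le (e := e / (m (C0_cst 1) + 1)) _) _.
  by rewrite divr_gt0 //; lra.
by rewrite mulrAC ler_pdivrMr ?ler_pM2l //; lra.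
Qed.
End Supported.
End PositiveRadon.

Lemma urysohn_point {R : realType} {T : uniformType} (b : T) (K : set T) :
  closed K -> ~ K b ->
  exists U : T -> R, [/\ continuous U, U b = 0, forall t, K t -> U t = 1
                       & forall t, 0 <= U t].
Proof.
move=> K_closed Kb; have sep := @point_uniform_separator R T _ _ K_closed Kb.
exists (Urysohn [set b] K); split.
- exact: Urysohn_continuous.
- by have := @Urysohn_sub0 T R _ _ sep (Urysohn [set b] K b); apply; exists b.
- move=> t Kt.
  by have := @Urysohn_sub1 T R _ _ sep (Urysohn [set b] K t); apply; exists t.
- move=> t; have := @Urysohn_range T R [set b] K (Urysohn [set b] K t) (ex_intro2 _ _ t I erefl).
  by rewrite /= in_itv /= => /andP[].
Qed.

Section Families.
Context {R : realType} {B : comNzRingType} (nrm : B -> R).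

Lemma Lmu_Mplus (mu : MB nrm -> C0 R (P1 nrm) -> R) : FB mu -> Mplus (Lmu mu).
Proof.
move=> [mu_b mu_cont]; split => //.
- by move=> a f g h hE; apply: funext => b; exact: (mu_b b).1.1.
- by move=> f f_ge0 b; exact: (mu_b b).1.2.
move=> psi h one hE oneE; apply: funext => b; have [mu_radon mu_supp] := mu_b b; have [mu_lin _] := mu_radon.
have rest_eq0 : mu b (C0_lin (- sval psi b) one h) = 0.
  apply: (radon_supported_eq0 mu_radon mu_supp) => p /= pb.
  by rewrite hE oneE pb mulr1 addNr.
rewrite /Lmu (mu_lin (sval psi b) one (C0_lin (- sval psi b) one h) h) ?rest_eq0 ?addr0 // => p /=.
by rewrite mulNr addNKr.
Qed.

Lemma Lmu_inj (mu nu : MB nrm -> C0 R (P1 nrm) -> R) : Lmu mu = Lmu nu -> mu = nu.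
Proof.
by move=> mu_nu; apply/funext => b; apply/funext => phi; rewrite -/(Lmu mu phi b) mu_nu.
Qed.

Section FromMplus.
Variable L : C0 R (P1 nrm) -> MB nrm -> R.
Hypothesis L_Mplus : Mplus L.

Lemma Mplus_radon b : positive_radon (fun phi => L phi b).
Proof.
have [_ L_lin L_ge0 _] := L_Mplus; split; last by move=> f /L_ge0.
by move=> a f g h hE; rewrite (L_lin a f g h hE).
Qed.

Lemma Mplus_supported b : supported_on (fun phi => L phi b) (fiber b).
Proof.
have [_ _ _ L_mod] := L_Mplus; move=> f supp_fb.
set K := closure [set p | sval f p != 0] in supp_fb.
have K_compact : compact K.
  exact: subclosed_compact (@closed_closure _ _) (@P1_compact R B nrm) (@subsetT _ _).
have piK_closed : closed (@proj1 R B nrm @` K).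
  apply: compact_closed (@MB_hausdorff R B nrm) _.
  exact: continuous_compact (continuous_subspaceT (@proj1_continuous R B nrm)) K_compact.
have b_notin_piK : ~ (@proj1 R B nrm @` K) b.
  by move=> [p Kp pb]; have : (K `&` fiber b) p by []; rewrite supp_fb.
have [U [U_cont Ub U_piK U_ge0]] := @urysohn_point R _ b _ piK_closed b_notin_piK.
have [M f_le_M] := C0_bounded f (@P1_compact R B nrm).
pose psi := C0_lin M (exist _ U U_cont) (C0_cst 0).
have H_cont : continuous (fun p => sval psi (proj1 p)).
  move=> p; exact: (continuous_comp (@proj1_continuous R B nrm p) (svalP psi (proj1 p))).
pose H : C0 R (P1 nrm) := exist _ _ H_cont.
have : `|L f b| <= L H b.
  apply: (radon_norm_le (Mplus_radon b)) => p /=; rewrite addr0.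
  have [->|f_neq0] := eqVneq (sval f p) 0.
    by rewrite normr0 mulr_ge0 // (le_trans (normr_ge0 _) (f_le_M p)).
  by rewrite U_piK ?mulr1 //; exists p => //; apply: subset_closure.
rewrite (L_mod psi H (C0_cst 1)) //= Ub mulr0 addr0 mul0r normr_le0.
by move/eqP.
Qed.

Lemma Mplus_FB : FB (fun b phi => L phi b).
Proof.
have [L_cont _ _ _] := L_Mplus.
by split=> // b; split; [exact: Mplus_radon | exact: Mplus_supported].
Qed.
End FromMplus.
End Families.

Theorem mainTheorem12 (R : realType) (B : comNzRingType) (nrm : B -> R)
  (hB : banach_ring nrm) :
  (forall mu : MB nrm -> C0 R (P1 nrm) -> R, FB mu -> Mplus (Lmu mu)) /\
  (forall mu nu : MB nrm -> C0 R (P1 nrm) -> R,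
      FB mu -> FB nu -> Lmu mu = Lmu nu -> mu = nu) /\
  (forall L : C0 R (P1 nrm) -> MB nrm -> R,
      Mplus L -> exists mu, FB mu /\ Lmu mu = L).
Proof.
split; first exact: Lmu_Mplus.
split; first by move=> mu nu _ _; exact: Lmu_inj.
by move=> L L_Mplus; exists (fun b phi => L phi b); split; first exact: Mplus_FB.
Qed.
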